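(* Let $A$ be a finite set of integers with $|A|\ge 3$. Then $$|S_2(A)|=(|A|-1)\cdot 2-3\binom 22+1=2|A|-4$$ if and only if one of the following (i)–(v) holds. (i) $A=\{c,\pm d\}$ for some $c\in\mathbb Z$ and $d\in\mathbb Z^+$ with $|c|\neq d$. (ii) $A=\{\pm c,\pm d\}$ for some $c,d\in\mathbb Z^+$ with $c\neq d$. (iii) $A=\{\pm d\}\cup \{c\pm d\}$ for some $c\in\mathbb Z$ and $d\in\mathbb Z^+$ with $c\neq 0,\pm 2d$. (iv) $A=\{rd:\ s\le r\le t\}$ for some integers $d\neq0$, $s\le-1$ and $t\ge1$ with $t-s\ge4$. (v) $A=\{(2r-1)d:\ s\le r\le t\}$ for some integers $d\neq0$, $s\le0$ and $t\ge 1$ with $t-s\ge4$.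
   Context: For a finite set $A\subseteq\mathbb Z$ and a positive integer $n$, define the restricted sumset $$S_n(A)=\{a_1+\cdots+a_n:\ a_1,\ldots,a_n\in A,\ \text{and}\ a_i^2\neq a_j^2\ \text{for}\ 1\le i<j\le n\}.$$ Notation: $\{\pm d\}=\{d,-d\}$, $\{c\pm d\}=\{c+d,c-d\}$, $\mathbb Z^+=\{1,2,3,\ldots\}$. *)

From HB Require Import structures.
From mathcomp Require Import all_boot all_order all_algebra.
From mathcomp Require Import finmap.
Set Implicit Arguments. Unset Strict Implicit. Unset Printing Implicit Defensive.
Import Order.TTheory GRing.Theory Num.Theory.
Local Open Scope ring_scope.
Local Open Scope fset_scope.

Fixpoint all_tuples (n : nat) (A : seq int) : seq (seq int) :=
  match n with
  | O => [:: [::]]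
  | S m => [seq a :: s | a <- A, s <- all_tuples m A]
  end.

Definition restricted_sumset (n : nat) (A : {fset int}) : {fset int} :=
  [fset \sum_(x <- s) x | s in [seq s <- all_tuples n A
                                 | pairwise (fun x y : int => x ^+ 2 != y ^+ 2) s]].

(* { r d : s <= r <= t }, for s <= t *)
Definition ap_set (d s t : int) : {fset int} :=
  [fset (s + (k%:Z)) * d | k in iota 0 (`|t - s|%N).+1].

(* { (2r-1) d : s <= r <= t }, for s <= t *)
Definition odd_ap_set (d s t : int) : {fset int} :=
  [fset (2 * (s + (k%:Z)) - 1) * d | k in iota 0 (`|t - s|%N).+1].

From HB Require Import structures.
From mathcomp Require Import all_boot all_order all_algebra.
From mathcomp Require Import finmap zify.
Import Order.TTheory GRing.Theory Num.Theory.
Local Open Scope fset_scope.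
Local Open Scope ring_scope.

(* Pick x of maximal absolute value; by the symmetry
   A |-> -A we may take x \in A, x > 0, and put U = A \ {x, -x}.  If x + c
   (c \in U) were already a restricted sum u + v of A \ {x}, then u and v
   would be two distinct elements of U above c; hence the two largest elements
   of U give two new sums, and |S2 A| >= |S2 (A \ x)| + 2.  When equality
   holds, every x + a with a below two elements of U is an old sum; for each of
   the five families this determines x and shows that A is again in a family.
   Conversely, each family has all its restricted sums inside an explicit set
   of 2|A| - 4 integers. *)

Local Notation S2 := (restricted_sumset 2).

Lemma restricted_sumset2P (A : {fset int}) z :
  reflect (exists a b, [/\ a \in A, b \in A, a != b, a != - b & z = a + b])
          (z \in S2 A).
Proof.
have mem_tuples2 s : s \in all_tuples 2 A ->
    exists a b, [/\ s = [:: a; b], a \in A & b \in A].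
  case/allpairsPdep => a [t [aA /allpairsPdep [b [u [bA]]]]].
  by rewrite inE => /eqP -> -> ->; exists a, b.
apply: (iffP idP) => [/imfsetP [s /=] | [a [b [aA bA ab abN ->]]]].
  rewrite mem_filter => /andP[sq /mem_tuples2 [a [b [Es aA bA]]]] ->; subst s.
  move: sq; rewrite /= !andbT eqf_sqr negb_or => /andP[ab abN].
  by exists a, b; rewrite !big_cons big_nil addr0.
apply/imfsetP; exists [:: a; b]; last by rewrite !big_cons big_nil addr0.
rewrite /= mem_filter /= andbT eqf_sqr negb_or ab abN.
have bT : [:: b] \in all_tuples 1 A by apply/allpairsPdep; exists b, [::].
by apply/allpairsPdep; exists a, [:: b].
Qed.

Lemma restricted_sumset2_sum (A : {fset int}) a b :
  a \in A -> b \in A -> a != b -> a != - b -> a + b \in S2 A.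
Proof. by move=> aA bA ab abN; apply/restricted_sumset2P; exists a, b. Qed.

Lemma restricted_sumset2S (A B : {fset int}) : A `<=` B -> S2 A `<=` S2 B.
Proof.
move=> /fsubsetP AB; apply/fsubsetP => _ /restricted_sumset2P [a [b [aA bA ab abN ->]]].
by apply: restricted_sumset2_sum => //; apply: AB.
Qed.

Lemma restricted_sumset2_0 (A : {fset int}) : 0 \notin S2 A.
Proof. by apply/restricted_sumset2P => -[a [b [_ _ _ abN]]]; move: abN; lia. Qed.

Definition oppfset (A : {fset int}) : {fset int} := [fset - a | a in A].

Lemma mem_oppfset (A : {fset int}) z : (z \in oppfset A) = (- z \in A).
Proof.
apply/imfsetP/idP => [[a aA ->] | zA]; first by rewrite opprK.
by exists (- z); rewrite ?opprK.
Qed.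

Lemma card_oppfset (A : {fset int}) : #|` oppfset A| = #|` A|.
Proof. by rewrite card_imfset //; apply: oppr_inj. Qed.

Lemma oppfsetK : involutive oppfset.
Proof. by move=> A; apply/fsetP => z; rewrite !mem_oppfset opprK. Qed.

Lemma restricted_sumset2_opp (A : {fset int}) : S2 (oppfset A) = oppfset (S2 A).
Proof.
apply/fsetP => z; rewrite mem_oppfset.
apply/restricted_sumset2P/restricted_sumset2P => -[a [b []]];
  rewrite ?mem_oppfset => aA bA ab abN E;
  by exists (- a), (- b); rewrite ?mem_oppfset ?opprK; split => //; lia.
Qed.

Lemma fset_max [U : {fset int}] [c0 : int] :
  c0 \in U -> exists2 c, c \in U & {in U, forall u, u <= c}.
Proof.
move=> c0U; exists (\big[Order.max/c0]_(u <- U) u).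
  rewrite big_seq; apply: (big_ind (fun y => y \in U)) => // a b aU bU.
  by case: leP.
by move=> u uU; apply: le_bigmax_seq.
Qed.

Lemma card_fset3 (a b c : int) :
  a != b -> a != c -> b != c -> #|` [fset a; b; c]| = 3%N.
Proof. by move=> *; rewrite -fsetUA !cardfsU1 cardfs1 !inE; apply/eqP; lia. Qed.

Lemma card_fset4 (a b c d : int) : a != b -> a != c -> a != d -> b != c -> b != d -> c != d ->
  #|` [fset a; b; c; d]| = 4%N.
Proof. by move=> *; rewrite -!fsetUA !cardfsU1 cardfs1 !inE; apply/eqP; lia. Qed.

Lemma card_fset4_le (a b c d : int) : (#|` [fset a; b; c; d]| <= 4)%N.
Proof. by rewrite -!fsetUA !cardfsU1 cardfs1; lia. Qed.

Lemma cardfs3P (K : choiceType) (A : {fset K}) : #|` A| = 3%N ->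
  exists a b c, [/\ a != b, a != c, b != c & A = [fset a; b; c]].
Proof.
move=> A3; have /fset0Pn [a aA] : A != fset0 by rewrite -cardfs_gt0 A3.
have /fset0Pn [b bA'] : A `\ a != fset0.
  by rewrite -cardfs_gt0; move: A3; rewrite (cardfsD1 a) aA add1n => -[->].
have /cardfs1P [c Ec] : #|` A `\ a `\ b| == 1%N.
  by move: A3; rewrite (cardfsD1 a) aA (cardfsD1 b (A `\ a)) bA' !add1n => -[->].
have : c \in A `\ a `\ b by rewrite Ec inE.
move: (bA'); rewrite !in_fsetD1 => /andP[ba _] /and3P[cb ca _].
exists a, b, c; split; rewrite 1?eq_sym //.
by rewrite -(fsetD1K aA) -(fsetD1K bA') Ec fsetUA.
Qed.

(** * Removing an element of maximal modulus *)

Definition new_shifts (A : {fset int}) (x : int) : {fset int} :=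
  [fset c in A `\ x `\ - x | x + c \notin S2 (A `\ x)].

Definition shifts_covered (A : {fset int}) (x : int) :=
  forall a b1 b2, a \in A -> b1 \in A -> b2 \in A ->
    [&& - x < a, a < b1, a < b2 & b1 != b2] -> x + a \in S2 A.

Lemma covered_shift_mem [A B : {fset int}] [x a b1 b2 : int] :
  S2 A `<=` B -> shifts_covered A x -> a \in A -> b1 \in A -> b2 \in A ->
  [&& - x < a, a < b1, a < b2 & b1 != b2] -> x + a \in B.
Proof. by move=> /fsubsetP AB cov aA b1A b2A conds; apply: AB; apply: cov conds. Qed.

Section PeelMax.

Variables (A : {fset int}) (x : int).
Hypotheses (xA : x \in A) (x_max : {in A, forall a, `|a| <= x}).

Local Notation U := (A `\ x `\ - x).

Lemma in_fsetD1pm c : (c \in U) = [&& c != - x, c != x & c \in A].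
Proof. by rewrite !in_fsetD1. Qed.

Lemma shift_in_S2D1_two_above c : c \in U -> x + c \in S2 (A `\ x) ->
  exists u v, [/\ u \in U, v \in U, u != v, c < u & c < v].
Proof.
rewrite in_fsetD1pm => /and3P[cNx cx /x_max cle].
move=> /restricted_sumset2P [u [v []]]; rewrite !in_fsetD1.
move=> /andP[ux /[dup] uA /x_max ule] /andP[vx /[dup] vA /x_max vle] uv uvN E.
by exists u, v; rewrite !in_fsetD1pm ux vx uA vA; split => //; lia.
Qed.

Lemma mem_new_shifts c : c \in U -> {in U &, forall u v, c < u -> c < v -> u = v} ->
  c \in new_shifts A x.
Proof.
move=> cU top; rewrite !inE -in_fsetD1pm cU /=; apply/negP => /(@shift_in_S2D1_two_above c cU).
by case=> u [v [uU vU /eqP uv cu cv]]; apply: uv; apply: top.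
Qed.

Lemma card_S2D1_new_shifts : (#|` S2 (A `\ x)| + #|` new_shifts A x| <= #|` S2 A|)%N.
Proof.
set T := new_shifts A x; set N := [fset x + c | c in T].
have TU c : c \in T -> c \in U /\ x + c \notin S2 (A `\ x) by rewrite !inE -in_fsetD1pm => /andP[].
have NA : N `<=` S2 A.
  apply/fsubsetP => _ /imfsetP [c /= /TU [+ _] ->]; rewrite in_fsetD1pm => /and3P[cNx cx cA].
  by apply: restricted_sumset2_sum => //; lia.
have disj : [disjoint S2 (A `\ x) & N].
  apply/fdisjointP => y yS; apply/imfsetP => -[c /= /TU [_ cN] E].
  by rewrite -E yS in cN.
have cardN : #|` N| = #|` T| by rewrite card_imfset //=; apply: addrI.
rewrite -cardN; have := (leq_card_fsetU (S2 (A `\ x)) N).2; rewrite disj => /eqP <-.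
apply: fsubset_leq_card.
by rewrite fsubUset NA restricted_sumset2S // fsubD1set.
Qed.

Lemma top_new_shifts : (2 <= #|` U|)%N -> exists c1 c2,
  [/\ c1 \in new_shifts A x, c2 \in new_shifts A x, c2 < c1 &
      forall a b1 b2, b1 \in U -> b2 \in U -> b1 != b2 -> a < b1 -> a < b2 -> a < c2].
Proof.
move=> U2; have /fset0Pn [c0 c0U] : U != fset0 by rewrite -cardfs_gt0 ltnW.
have [c1 c1U c1max] := fset_max c0U.
have /fset0Pn [c0' c0'U] : U `\ c1 != fset0.
  by rewrite -cardfs_gt0; move: U2; rewrite (cardfsD1 c1) c1U.
have [c2 /[dup] c2U' + c2max] := fset_max c0'U; rewrite in_fsetD1 => /andP[c2c1 c2U].
have c21 : c2 < c1 by rewrite lt_neqAle c2c1 c1max.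
have below a b1 b2 : b1 \in U -> b2 \in U -> b1 != b2 -> a < b1 -> a < b2 -> a < c2.
  move=> b1U b2U b12 ab1 ab2; have [b1c1 | b1c1] := eqVneq b1 c1.
    by apply: lt_le_trans ab2 (c2max _ _); rewrite in_fsetD1 b2U -b1c1 eq_sym b12.
  by apply: lt_le_trans ab1 (c2max _ _); rewrite in_fsetD1 b1U b1c1.
exists c1, c2; split => //; apply: mem_new_shifts => // u v uU vU.
  by move=> /lt_geF; rewrite c1max.
by have [//|uv c2u c2v] := eqVneq u v; have := below _ _ _ uU vU uv c2u c2v; rewrite ltxx.
Qed.

Lemma card_S2_peel : (2 <= #|` U|)%N -> (#|` S2 (A `\ x)| + 2 <= #|` S2 A|)%N.
Proof.
case/top_new_shifts => c1 [c2 [c1T c2T c21 _]].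
apply: leq_trans card_S2D1_new_shifts; rewrite leq_add2l.
have <- : #|` [fset c2; c1]| = 2%N by rewrite cardfs2 lt_eqF.
by apply: fsubset_leq_card; rewrite fsubUset !fsub1set c2T c1T.
Qed.

Lemma card_S2_peel_eq : (2 <= #|` U|)%N ->
  (#|` S2 (A `\ x)| + 2 = #|` S2 A|)%N -> shifts_covered (A `\ x) x.
Proof.
move=> /top_new_shifts [c1 [c2 [c1T c2T c21 below]]] eq_card a b1 b2 aA b1A b2A.
move=> /and4P[aNx ab1 ab2 b12].
have inU b : b \in A `\ x -> - x < b -> b \in U.
  by rewrite !in_fsetD1 => /andP[bx bA] bNx; rewrite bx bA andbT; lia.
have aU := inU a aA aNx; have b1U := inU b1 b1A (lt_trans aNx ab1).
have ac2 := below a b1 b2 b1U (inU b2 b2A (lt_trans aNx ab2)) b12 ab1 ab2.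
apply: contraT => aS; have aT : a \in new_shifts A x by rewrite !inE -in_fsetD1pm aU.
suff : (3 <= #|` new_shifts A x|)%N by have := card_S2D1_new_shifts; rewrite -eq_card; lia.
have <- : #|` [fset a; c2; c1]| = 3%N by apply: card_fset3; rewrite lt_eqF // (lt_trans ac2).
by apply: fsubset_leq_card; rewrite !fsubUset !fsub1set aT c2T c1T.
Qed.

End PeelMax.

(** * Arithmetic progressions *)

Definition int_range_image (f : int -> int) (s t : int) : {fset int} :=
  [fset f (s + k%:Z) | k in iota 0 (`|t - s|%N).+1].

Lemma ap_setE d s t : ap_set d s t = int_range_image (fun r => r * d) s t.
Proof. by []. Qed.

Lemma odd_ap_setE d s t : odd_ap_set d s t = int_range_image (fun r => (2 * r - 1) * d) s t.
Proof. by []. Qed.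

Lemma mem_int_range_image [f s t z] : s <= t ->
  reflect (exists2 r, s <= r <= t & z = f r) (z \in int_range_image f s t).
Proof.
move=> st; apply: (iffP idP) => [/imfsetP [k /=] | [r rst ->]].
  by rewrite !inE mem_iota => kst ->; exists (s + k%:Z) => //; lia.
by apply/imfsetP; exists `|r - s|%N; rewrite /= ?inE ?mem_iota; [lia | congr f; lia].
Qed.

Lemma card_int_range_image f s t : injective f -> s <= t ->
  #|` int_range_image f s t| = (`|t - s|).+1.
Proof.
move=> f_inj st; rewrite card_imfset => [|a b /f_inj]; last by lia.
by rewrite -[LHS]/(size (undup (iota 0 _))) undup_id ?iota_uniq // size_iota.
Qed.

Lemma int_range_image5 f s t : t = s + 4 ->
  int_range_image f s t = [fset f s; f (s + 1); f (s + 2); f (s + 3); f t].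
Proof.
move=> ts; apply/fsetP => z; have st : s <= t by lia.
apply/(mem_int_range_image st)/idP => [[r rst ->] | ].
  have : r = s \/ r = s + 1 \/ r = s + 2 \/ r = s + 3 \/ r = t by lia.
  by rewrite !inE; case=> [|[|[|[]]]] ->; rewrite eqxx ?orbT.
rewrite !inE => /orP[/orP[/orP[/orP[]|]|]|] /eqP ->;
  [exists s | exists (s + 1) | exists (s + 2) | exists (s + 3) | exists t] => //; lia.
Qed.

Lemma mem_ap_set [d s t z] : s <= t ->
  reflect (exists2 r, s <= r <= t & z = r * d) (z \in ap_set d s t).
Proof. exact: mem_int_range_image. Qed.

Lemma mem_odd_ap_set [d s t z] : s <= t ->
  reflect (exists2 r, s <= r <= t & z = (2 * r - 1) * d) (z \in odd_ap_set d s t).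
Proof. exact: mem_int_range_image. Qed.

Lemma card_ap_set [d s t] : d != 0 -> s <= t -> #|` ap_set d s t| = (`|t - s|).+1.
Proof. by move=> d0; rewrite ap_setE; apply: card_int_range_image => a b /(mulIf d0). Qed.

Lemma card_odd_ap_set [d s t] : d != 0 -> s <= t -> #|` odd_ap_set d s t| = (`|t - s|).+1.
Proof. by move=> d0; rewrite odd_ap_setE; apply: card_int_range_image => a b /(mulIf d0); lia. Qed.

Lemma oppfset_ap_set d s t : s <= t -> oppfset (ap_set d s t) = ap_set (- d) s t.
Proof.
move=> st; apply/fsetP => z; rewrite mem_oppfset.
by apply/(mem_ap_set st)/(mem_ap_set st) => -[r rst E];
  exists r; rewrite // ?mulrN; lia.
Qed.

Lemma oppfset_odd_ap_set d s t : s <= t -> oppfset (odd_ap_set d s t) = odd_ap_set (- d) s t.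
Proof.
move=> st; apply/fsetP => z; rewrite mem_oppfset.
by apply/(mem_odd_ap_set st)/(mem_odd_ap_set st) => -[r rst E];
  exists r; rewrite // ?mulrN; lia.
Qed.

Lemma ap_set_flip d s t : s <= t -> ap_set d s t = ap_set (- d) (- t) (- s).
Proof.
move=> st; have ts : - t <= - s by rewrite lerN2.
apply/fsetP => z; apply/(mem_ap_set st)/(mem_ap_set ts) => -[r rst ->];
  by exists (- r); rewrite ?mulrNN ?opprK //; lia.
Qed.

Lemma odd_ap_set_flip d s t : s <= t -> odd_ap_set d s t = odd_ap_set (- d) (1 - t) (1 - s).
Proof.
move=> st; have ts : 1 - t <= 1 - s by lia.
apply/fsetP => z; apply/(mem_odd_ap_set st)/(mem_odd_ap_set ts) => -[r rst ->];
  by exists (1 - r); [lia | rewrite mulrN -mulNr; congr (_ * _); lia].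
Qed.

(** * The extremal families *)

Definition sym_pair_and_one (A : {fset int}) :=
  exists c d : int, 0 < d /\ `|c| != d /\ A = [fset c; d; - d].

Definition two_sym_pairs (A : {fset int}) :=
  exists c d : int, 0 < c /\ 0 < d /\ c != d /\ A = [fset c; - c; d; - d].

Definition sym_pair_and_shift (A : {fset int}) :=
  exists c d : int, 0 < d /\ c != 0 /\ c != 2 * d /\ c != - (2 * d) /\
                    A = [fset d; - d; c + d; c - d].

Definition ap_through_zero (A : {fset int}) :=
  exists d s t : int, d != 0 /\ s <= -1 /\ 1 <= t /\ 4 <= t - s /\ A = ap_set d s t.

Definition odd_multiples_ap (A : {fset int}) :=
  exists d s t : int, d != 0 /\ s <= 0 /\ 1 <= t /\ 4 <= t - s /\ A = odd_ap_set d s t.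

Definition extremal (A : {fset int}) :=
  sym_pair_and_one A \/ two_sym_pairs A \/ sym_pair_and_shift A \/
  ap_through_zero A \/ odd_multiples_ap A.

Lemma extremal_opp (A : {fset int}) : extremal A -> extremal (oppfset A).
Proof.
case=> [|[|[|[]]]].
- case=> c [d [d_gt0 [cd ->]]]; left; exists (- c), d; rewrite normrN; do !split => //.
  by apply/fsetP => z; rewrite mem_oppfset !inE; apply/idP/idP; lia.
- case=> c [d [c_gt0 [d_gt0 [cd ->]]]]; right; left; exists c, d; do !split => //.
  by apply/fsetP => z; rewrite mem_oppfset !inE; apply/idP/idP; lia.
- case=> c [d [d_gt0 [c0 [c2d [cN2d ->]]]]]; right; right; left.
  exists (- c), d; do !split => //; try lia.
  by apply/fsetP => z; rewrite mem_oppfset !inE; apply/idP/idP; lia.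
- case=> d [s [t [d0 [s1 [t1 [ts ->]]]]]]; do 3 right; left.
  by exists (- d), s, t; rewrite oppfset_ap_set ?oppr_eq0 //; lia.
- case=> d [s [t [d0 [s0 [t1 [ts ->]]]]]]; do 4 right.
  by exists (- d), s, t; rewrite oppfset_odd_ap_set ?oppr_eq0 //; lia.
Qed.

Lemma card_S2_le_ap_set [A : {fset int}] [e p q : int] : e != 0 -> p <= 0 <= q ->
  S2 A `<=` ap_set e p q -> (#|` S2 A| <= `|q - p|)%N.
Proof.
move=> e0 /andP[p0 q0] sub; have pq : p <= q by apply: le_trans q0.
have ap0 : 0 \in ap_set e p q by apply/(mem_ap_set pq); exists 0; rewrite ?mul0r ?p0.
have := card_ap_set e0 pq; rewrite (cardfsD1 0) ap0 add1n => -[<-].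
apply: fsubset_leq_card; apply/fsubsetP => z zS; rewrite in_fsetD1 (fsubsetP sub) // andbT.
by apply: contraTneq zS => ->; apply: restricted_sumset2_0.
Qed.

Lemma restricted_sumset2_sym_pair_and_one (c d : int) :
  S2 [fset c; d; - d] `<=` [fset c + d; c - d].
Proof. by apply/fsubsetP => z /restricted_sumset2P [u [v [+ + uv uvN ->]]]; rewrite !inE; lia. Qed.

Lemma restricted_sumset2_two_sym_pairs (c d : int) :
  S2 [fset c; - c; d; - d] `<=` [fset c + d; c - d; - c + d; - c - d].
Proof. by apply/fsubsetP => z /restricted_sumset2P [u [v [+ + uv uvN ->]]]; rewrite !inE; lia. Qed.

Lemma restricted_sumset2_sym_pair_and_shift (c d : int) :
  S2 [fset d; - d; c + d; c - d] `<=` [fset c + 2 * d; c; c - 2 * d; 2 * c].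
Proof. by apply/fsubsetP => z /restricted_sumset2P [u [v [+ + uv uvN ->]]]; rewrite !inE; lia. Qed.

Lemma card_S2_extremal_le [A : {fset int}] : extremal A -> (#|` S2 A| + 4 <= 2 * #|` A|)%N.
Proof.
case=> [|[|[|[]]]].
- case=> c [d [d_gt0 [cd ->]]].
  rewrite card_fset3; try lia.
  by have := fsubset_leq_card (restricted_sumset2_sym_pair_and_one c d); rewrite cardfs2; lia.
- case=> c [d [c_gt0 [d_gt0 [cd ->]]]].
  rewrite card_fset4; try lia.
  have := fsubset_leq_card (restricted_sumset2_two_sym_pairs c d).
  by move/leq_trans/(_ (card_fset4_le _ _ _ _)); lia.
- case=> c [d [d_gt0 [c0 [c2d [cN2d ->]]]]].
  rewrite card_fset4; try lia.
  have := fsubset_leq_card (restricted_sumset2_sym_pair_and_shift c d).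
  by move/leq_trans/(_ (card_fset4_le _ _ _ _)); lia.
- case=> d [s [t [d0 [s1 [t1 [ts ->]]]]]]; have st : s <= t by lia.
  rewrite card_ap_set //.
  have sub : S2 (ap_set d s t) `<=` ap_set d (2 * s + 1) (2 * t - 1).
    apply/fsubsetP => _ /restricted_sumset2P [u [v [/(mem_ap_set st) [r1 r1st ->]
      /(mem_ap_set st) [r2 r2st ->] uv _ ->]]].
    apply/mem_ap_set; first lia.
    by exists (r1 + r2); rewrite ?mulrDl //; move: uv; rewrite (inj_eq (mulIf d0)); lia.
  have bnd : 2 * s + 1 <= 0 <= 2 * t - 1 by lia.
  by have := card_S2_le_ap_set d0 bnd sub; lia.
- case=> d [s [t [d0 [s0 [t1 [ts ->]]]]]]; have st : s <= t by lia.
  rewrite card_odd_ap_set //.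
  have d2 : 2 * d != 0 by lia.
  have sub : S2 (odd_ap_set d s t) `<=` ap_set (2 * d) (2 * s) (2 * t - 2).
    apply/fsubsetP => _ /restricted_sumset2P [u [v [/(mem_odd_ap_set st) [r1 r1st ->]
      /(mem_odd_ap_set st) [r2 r2st ->] uv _ ->]]].
    apply/mem_ap_set; first lia.
    exists (r1 + r2 - 1); last by rewrite mulrA [_ * 2]mulrC -!mulrDl; congr (_ * _); lia.
    by move: uv; rewrite (inj_eq (mulIf d0)); lia.
  have bnd : 2 * s <= 0 <= 2 * t - 2 by lia.
  by have := card_S2_le_ap_set d2 bnd sub; lia.
Qed.

(** * Extending an extremal set by a new maximum *)

Section RangeExtension.

Variables (f : int -> int) (s t x : int).
Hypotheses (f_mono : {mono f : p q / p <= q})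
           (f_add : forall p q r, f p + f q = f (p + q - r) + f r).
Hypotheses (st : s + 2 < t) (xR : x \notin int_range_image f s t)
           (x_max : {in int_range_image f s t, forall a, `|a| <= x})
           (cov : shifts_covered (int_range_image f s t) x).

Lemma int_range_image_extend : x |` int_range_image f s t = int_range_image f s (t + 1).
Proof.
have [st' st1] : s <= t /\ s <= t + 1 by lia.
have f_lt : {mono f : p q / p < q} := leW_mono f_mono.
have mem r : s <= r <= t -> f r \in int_range_image f s t.
  by move=> rst; apply/(mem_int_range_image st'); exists r.
have /x_max fs_le := mem s ltac:(lia); have /x_max ft_le := mem t ltac:(lia).
have ft_lt : f t < x.
  rewrite lt_neqAle (le_trans (ler_norm _) ft_le) andbT.
  by apply: contraNneq xR => <-; apply: mem; lia.
have ft2 : - x < f (t - 2).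
  by apply: le_lt_trans (_ : f s < _); [move: fs_le; lia | rewrite f_lt; lia].
have /restricted_sumset2P [_ [_ [/(mem_int_range_image st') [r1 r1st ->]
                                 /(mem_int_range_image st') [r2 r2st ->]]]] :=
  cov _ _ _ (mem (t - 2) ltac:(lia)) (mem t ltac:(lia)) (mem (t - 1) ltac:(lia))
    ltac:(by rewrite ft2 !f_lt (inj_eq (inc_inj f_mono)); lia).
rewrite (inj_eq (inc_inj f_mono)) (f_add _ _ (t - 2)) => r12 _ /addIr xE.
(* x = f (r1 + r2 - (t - 2)) > f t with r1 != r2 <= t forces r1 + r2 = 2 t - 1. *)
have {}xE : x = f (t + 1).
  have lt_t : t < r1 + r2 - (t - 2) by rewrite -f_lt -xE.
  by rewrite xE; congr f; lia.
apply/fsetP => z; rewrite in_fset1U; apply/idP/idP.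
  case/orP=> [/eqP -> | /(mem_int_range_image st') [r rst ->]];
    apply/(mem_int_range_image st1); first by exists (t + 1) => //; lia.
  by exists r => //; lia.
case/(mem_int_range_image st1) => r rst ->.
have [-> | rt] := eqVneq r (t + 1); first by rewrite xE eqxx.
by rewrite mem ?orbT //; lia.
Qed.

End RangeExtension.

Lemma ap_through_zero_extend (A : {fset int}) x : ap_through_zero A ->
  x \notin A -> {in A, forall a, `|a| <= x} -> shifts_covered A x -> ap_through_zero (x |` A).
Proof.
case=> d [s [t [d0 [s1 [t1 [ts ->]]]]]].
wlog d_gt0 : d s t d0 s1 t1 ts / 0 < d.
  move=> ext; have [|d_le0] := ltrP 0 d; first exact: ext.
  by rewrite ap_set_flip; [apply: ext; rewrite ?oppr_eq0 //; lia | lia].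
move=> xA x_max cov; exists d, s, (t + 1); do !split; try lia.
rewrite ap_setE int_range_image_extend //; last lia.
- by move=> p q; rewrite ler_pM2r.
- by move=> p q r; rewrite -!mulrDl subrK.
Qed.

Lemma odd_multiples_ap_extend (A : {fset int}) x : odd_multiples_ap A ->
  x \notin A -> {in A, forall a, `|a| <= x} -> shifts_covered A x -> odd_multiples_ap (x |` A).
Proof.
case=> d [s [t [d0 [s0 [t1 [ts ->]]]]]].
wlog d_gt0 : d s t d0 s0 t1 ts / 0 < d.
  move=> ext; have [|d_le0] := ltrP 0 d; first exact: ext.
  by rewrite odd_ap_set_flip; [apply: ext; rewrite ?oppr_eq0 //; lia | lia].
move=> xA x_max cov; exists d, s, (t + 1); do !split; try lia.
rewrite odd_ap_setE int_range_image_extend //; last lia.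
- by move=> p q; rewrite ler_pM2r //; lia.
- by move=> p q r; rewrite -!mulrDl; congr (_ * _); lia.
Qed.

Lemma sym_pair_and_one_extend (A : {fset int}) x : sym_pair_and_one A ->
  x \notin A -> {in A, forall a, `|a| <= x} -> shifts_covered A x -> extremal (x |` A).
Proof.
case=> c [d [d_gt0 [cd ->]]] xA x_max cov.
set F := [fset c; d; - d].
have [cA dA dNA] : [/\ c \in F, d \in F & - d \in F] by rewrite !inE !eqxx ?orbT.
have := x_max _ cA; have := x_max _ dA; move: xA; rewrite !inE => xA dx cx.
have sub := restricted_sumset2_sym_pair_and_one c d.
have [cE | cNx] := eqVneq c (- x).
  right; left; exists x, d; do !split; try lia.
  by apply/fsetP => z; rewrite /F cE !inE; clear; apply/idP/idP; lia.
have [c_lt | c_ge] := ltrP c (- d).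
  by have := covered_shift_mem sub cov cA dA dNA ltac:(lia); rewrite !inE; lia.
have := covered_shift_mem sub cov dNA dA cA ltac:(lia); rewrite !inE => xE.
have {xE} xE : x = c + 2 * d by lia.
right; right; left; exists (c + d), d; do !split; try lia.
by apply/fsetP => z; rewrite /F xE !inE; clear; apply/idP/idP; lia.
Qed.

Lemma two_sym_pairs_extend (A : {fset int}) x : two_sym_pairs A ->
  x \notin A -> {in A, forall a, `|a| <= x} -> shifts_covered A x -> extremal (x |` A).
Proof.
case=> c [d [c_gt0 [d_gt0 [cd ->]]]] xA x_max cov.
set F := [fset c; - c; d; - d].
have [cA cNA dA dNA] : [/\ c \in F, - c \in F, d \in F & - d \in F].
  by rewrite !inE !eqxx ?orbT.
have := x_max _ cA; have := x_max _ dA; move: xA; rewrite !inE => xA dx cx.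
have sub := restricted_sumset2_two_sym_pairs c d.
have := covered_shift_mem sub cov cNA cA dA ltac:(lia).
have := covered_shift_mem sub cov dNA cA dA ltac:(lia).
rewrite !inE => xd xc.
have {xd} xd : x = 2 * d + c \/ x = 2 * d - c by lia.
have {xc} xc : x = 2 * c + d \/ x = 2 * c - d by lia.
have [m [m_gt0 [xE [[cE dE] | [cE dE]]]]] : exists m, 0 < m /\ x = 5 * m /\
    (c = m /\ d = 3 * m \/ c = 3 * m /\ d = m).
  by have [cd_lt | dc_lt] := ltrP c d; [exists c | exists d]; lia.
all: do 4 right; exists m, (-1), 3; do !split; try lia.
all: rewrite odd_ap_setE int_range_image5 // /F xE cE dE.
all: by apply/fsetP => z; rewrite !inE; clear; apply/idP/idP; lia.
Qed.

Lemma sym_pair_and_shift_extend (A : {fset int}) x : sym_pair_and_shift A ->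
  x \notin A -> {in A, forall a, `|a| <= x} -> shifts_covered A x -> extremal (x |` A).
Proof.
case=> c [d [d_gt0 [c0 [c2d [cN2d ->]]]]] xA x_max cov.
set F := [fset d; - d; c + d; c - d].
have [dA dNA cpA cmA] : [/\ d \in F, - d \in F, c + d \in F & c - d \in F].
  by rewrite !inE !eqxx ?orbT.
have := x_max _ dA; have := x_max _ cpA; have := x_max _ cmA.
move: xA; rewrite !inE => xA cmx cpx dx.
have sub := restricted_sumset2_sym_pair_and_shift c d.
have [c_gt0 | c_le0] := ltrP 0 c.
  have [c_lt | c_ge] := ltrP c (2 * d).
    have := covered_shift_mem sub cov dNA cpA dA ltac:(lia).
    have := covered_shift_mem sub cov cmA cpA dA ltac:(lia).
    rewrite !inE => x1 x2; have [xE cE] : x = 3 * d /\ c = d by lia.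
    do 3 right; left; exists d, (-1), 3; do !split; try lia.
    rewrite ap_setE int_range_image5 // /F xE cE.
    by apply/fsetP => z; rewrite !inE; clear; apply/idP/idP; lia.
  have := covered_shift_mem sub cov dNA cpA cmA ltac:(lia).
  have := covered_shift_mem sub cov dA cpA cmA ltac:(lia).
  rewrite !inE => x1 x2; have [xE cE] : x = 7 * d /\ c = 4 * d by lia.
  do 4 right; exists d, 0, 4; do !split; try lia.
  rewrite odd_ap_setE int_range_image5 // /F xE cE.
  by apply/fsetP => z; rewrite !inE; clear; apply/idP/idP; lia.
have [xE | xNE] := eqVneq x (d - c).
  have [c_lt | c_ge] := ltrP c (- (2 * d)).
    by have := covered_shift_mem sub cov cpA dA dNA ltac:(lia); rewrite !inE; lia.
  have := covered_shift_mem sub cov dNA dA cpA ltac:(lia); rewrite !inE => x1.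
  have cE : c = - d by lia.
  do 3 right; left; exists d, (-2), 2; do !split; try lia.
  rewrite ap_setE int_range_image5 // /F xE cE.
  by apply/fsetP => z; rewrite !inE; clear; apply/idP/idP; lia.
have := covered_shift_mem sub cov cmA dA cpA ltac:(lia); rewrite !inE => x1.
have {x1} xE : x = 3 * d by lia.
by have := covered_shift_mem sub cov dNA dA cpA ltac:(lia); rewrite !inE; lia.
Qed.

Lemma extremal_extend [A : {fset int}] [x : int] : extremal A ->
  x \notin A -> {in A, forall a, `|a| <= x} -> shifts_covered A x -> extremal (x |` A).
Proof.
case=> [|[|[|[]]]] FA xA x_max cov.
- exact: sym_pair_and_one_extend.
- exact: two_sym_pairs_extend.
- exact: sym_pair_and_shift_extend.
- by do 3 right; left; apply: ap_through_zero_extend.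
- by do 4 right; apply: odd_multiples_ap_extend.
Qed.

(** * Induction on the size of A *)

Lemma card_S2_fset3 [A : {fset int}] : #|` A| = 3%N ->
  (2 <= #|` S2 A|)%N /\ (#|` S2 A| = 2%N -> sym_pair_and_one A).
Proof.
case/cardfs3P => a [b [c [ab ac bc ->]]]; set F : {fset int} := [fset a + b; a + c; b + c].
have S2E : S2 [fset a; b; c] = F `\ 0.
  apply/fsetP => z; rewrite in_fsetD1; apply/idP/idP.
    by case/restricted_sumset2P => u [v [+ + uv uvN ->]]; rewrite !inE; lia.
  rewrite !inE => /andP[z0 /orP[/orP[]|]] /eqP zE; subst z;
    apply: restricted_sumset2_sum; rewrite ?inE ?eqxx ?orbT //; lia.
have F3 : #|` F| = 3%N by apply: card_fset3; lia.
have : (#|` S2 [fset a; b; c]| + (0%R \in F) = 3)%N.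
  by rewrite S2E -F3 (cardfsD1 0 F) addnC.
rewrite !inE; case: (boolP (_ || _)) => [/orP[/orP[]|] /eqP s0 | _] cardE;
  last by split=> [|S2_2]; [lia | exfalso; lia].
- split=> [|_]; first lia; exists c, `|a|; do !split; try lia.
  by apply/fsetP => z; rewrite !inE; apply/idP/idP; lia.
- split=> [|_]; first lia; exists b, `|a|; do !split; try lia.
  by apply/fsetP => z; rewrite !inE; apply/idP/idP; lia.
- split=> [|_]; first lia; exists a, `|b|; do !split; try lia.
  by apply/fsetP => z; rewrite !inE; apply/idP/idP; lia.
Qed.

Lemma exists_abs_max [A : {fset int}] : (2 <= #|` A|)%N ->
  exists x, [/\ 0 < x, {in A, forall a, `|a| <= x} & (x \in A) || (- x \in A)].
Proof.
move=> A2; have /fset0Pn [a0 a0A] : A != fset0 by rewrite -cardfs_gt0 ltnW.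
have /fset_max [x + x_max] : a0 \in A `|` oppfset A by rewrite in_fsetU a0A.
rewrite in_fsetU mem_oppfset => xA.
have abs_le a : a \in A -> `|a| <= x.
  move=> aA; have := x_max a; have := x_max (- a).
  by rewrite !in_fsetU mem_oppfset opprK aA orbT => /(_ isT) aN /(_ isT) aP; lia.
exists x; split => //; rewrite ltNge; apply/negP => x_le0.
have : A `<=` [fset 0] by apply/fsubsetP => a /abs_le; rewrite inE; lia.
by move/fsubset_leq_card; rewrite cardfs1; lia.
Qed.

Lemma oppfsetD1 (A : {fset int}) a : oppfset A `\ a = oppfset (A `\ - a).
Proof. by apply/fsetP => z; rewrite !(in_fsetD1, mem_oppfset) eqr_opp. Qed.

Lemma peel_max (A : {fset int}) x : x \in A -> {in A, forall a, `|a| <= x} -> (4 <= #|` A|)%N ->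
  (#|` S2 (A `\ x)| + 2 <= #|` S2 A|)%N /\
  ((#|` S2 (A `\ x)| + 2)%N = #|` S2 A| -> extremal (A `\ x) -> extremal A).
Proof.
move=> xA x_max A4.
have U2 : (2 <= #|` A `\ x `\ - x|)%N.
  rewrite -(leq_add2l 2); apply: leq_trans A4 _.
  by rewrite (cardfsD1 x) xA (cardfsD1 (- x) (A `\ x)) addnA leq_add2r; case: (_ \in _).
split=> [|eq_card ext]; first exact: card_S2_peel.
rewrite -(fsetD1K xA); apply: extremal_extend ext _ _ _.
- by rewrite in_fsetD1 eqxx.
- by move=> a; rewrite in_fsetD1 => /andP[_ /x_max].
- exact: card_S2_peel_eq.
Qed.

Lemma peel [A : {fset int}] : (4 <= #|` A|)%N -> exists2 x, x \in A &
  (#|` S2 (A `\ x)| + 2 <= #|` S2 A|)%N /\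
  ((#|` S2 (A `\ x)| + 2)%N = #|` S2 A| -> extremal (A `\ x) -> extremal A).
Proof.
move=> A4; have [x [_ x_max /orP[xA | xNA]]] := exists_abs_max (ltnW (ltnW A4)).
  by exists x => //; apply: peel_max.
have [] := @peel_max (oppfset A) x; rewrite ?mem_oppfset ?card_oppfset //.
  by move=> a; rewrite mem_oppfset => /x_max; rewrite normrN.
rewrite oppfsetD1 !restricted_sumset2_opp !card_oppfset => le_card ext.
exists (- x) => //; split=> // eq_card /extremal_opp /(ext eq_card).
by move/extremal_opp; rewrite oppfsetK.
Qed.

Lemma card_S2_ge [A : {fset int}] : (3 <= #|` A|)%N -> (2 * #|` A| <= #|` S2 A| + 4)%N.
Proof.
move=> A3; have [n An] : exists n, #|` A| = n.+3 by exists (#|` A| - 3)%N; lia.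
elim: n A An {A3} => [|n IH] A An; first by have [] := card_S2_fset3 An; lia.
have [x xA [le_card _]] := peel (A := A) ltac:(lia).
have Ax : #|` A `\ x| = n.+3 by move: An; rewrite (cardfsD1 x) xA => -[].
by have := IH _ Ax; lia.
Qed.

Lemma extremal_of_card_S2 [A : {fset int}] : (3 <= #|` A|)%N ->
  (2 * #|` A| = #|` S2 A| + 4)%N -> extremal A.
Proof.
move=> A3; have [n An] : exists n, #|` A| = n.+3 by exists (#|` A| - 3)%N; lia.
elim: n A An {A3} => [|n IH] A An eq_card.
  by have [_ ext] := card_S2_fset3 An; left; apply: ext; lia.
have [x xA [le_card ext]] := peel (A := A) ltac:(lia).
have Ax : #|` A `\ x| = n.+3 by move: An; rewrite (cardfsD1 x) xA => -[].
have ge_card := card_S2_ge (A := A `\ x) ltac:(lia).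
by apply: ext; [lia | apply: IH; lia].
Qed.

Local Open Scope fset_scope.

Theorem theorem1p3 (A : {fset int}) :
  (3 <= #|` A|)%N ->
  ((#|` restricted_sumset 2 A| = 2 * #|` A| - 4)%N <->
   (exists (c d : int), 0 < d /\ `|c| != d /\ A = [fset c; d; - d]) \/
       (exists (c d : int), 0 < c /\ 0 < d /\ c != d /\ A = [fset c; - c; d; - d]) \/
       (exists (c d : int), 0 < d /\ c != 0 /\ c != 2 * d /\ c != - (2 * d) /\
                            A = [fset d; - d; (c + d)%R; (c - d)%R]) \/
       (exists (d s t : int), d != 0 /\ s <= -1 /\ 1 <= t /\ 4 <= t - s /\
                              A = ap_set d s t) \/
       (exists (d s t : int), d != 0 /\ s <= 0 /\ 1 <= t /\ 4 <= t - s /\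
                              A = odd_ap_set d s t)).
Proof.
move=> A3; have ge_card := card_S2_ge A3.
split=> [eq_card | ext]; first by apply: extremal_of_card_S2; lia.
by have := card_S2_extremal_le ext; lia.
Qed.
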